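(* Let $\alpha,\beta,\gamma\in\mathbb{R}$, $s_1,s_2\in S_X$, $p_0\in[0,1]$ and $\phi>0$, and write $f_i(y):=\alpha u_X(s_i,y)+\beta u_Y(s_i,y)+\gamma$. Suppose that for every $y\in S_Y$, $$-\frac{1-(1-\lambda)p_0}{\phi}\le f_1(y)\le-\frac{(1-\lambda)(1-p_0)}{\phi},\qquad \frac{(1-\lambda)p_0}{\phi}\le f_2(y)\le\frac{\lambda+(1-\lambda)p_0}{\phi}.$$ Define $p(s_1,y):=\frac{1}{\lambda}\big(\phi f_1(y)-(1-\lambda)p_0+1\big)$ and $p(s_2,y):=\frac{1}{\lambda}\big(\phi f_2(y)-(1-\lambda)p_0\big)$ (these lie in $[0,1]$), and let player $X$ use the memory-one strategy with initial action $\sigma_X^0=p_0\delta_{s_1}+(1-p_0)\delta_{s_2}$ and $\sigma_X[x,y]=p(x,y)\delta_{s_1}+(1-p(x,y))\delta_{s_2}$ for $x\in\{s_1,s_2\}$, $y\in S_Y$ (so $X$ only ever plays $s_1$ or $s_2$). Then for every behavioral strategy of $Y$, $\alpha\pi_X+\beta\pi_Y+\gamma=0$.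
   Context: Standing framework. Let $S_X,S_Y$ be measurable spaces (action spaces of players $X$ and $Y$), $u_X,u_Y:S_X\times S_Y\to\mathbb{R}$ bounded measurable payoff functions, and $\lambda\in(0,1)$ a discount factor. Histories: $\mathcal{H}^T=(S_X\times S_Y)^T$, $\mathcal{H}^0=\{\varnothing\}$, $\mathcal{H}=\bigsqcup_T\mathcal{H}^T$. A behavioral strategy for a player is a Markov kernel from $\mathcal{H}$ to that player's action space. A memory-one strategy for $X$ is given by an initial probability measure $\sigma_X^0$ on $S_X$ and a Markov kernel $(x,y)\mapsto\sigma_X[x,y]$ from $S_X\times S_Y$ to $S_X$, applied to the last action pair. Given strategies, let $\mu_0=\sigma_X[\varnothing]\otimes\sigma_Y[\varnothing]$ and $\mu_t(E'\times E)=\int_{E'}(\sigma_X[h]\otimes\sigma_Y[h])(E)\,d\mu_{t-1}(h)$ on $\mathcal{H}^{t+1}$; let $\nu_t(E)=\mu_t(\mathcal{H}^t\times E)$. Expected payoffs: $\pi_X=(1-\lambda)\sum_{t\ge0}\lambda^t\int u_X\,d\nu_t$, $\pi_Y=(1-\lambda)\sum_{t\ge0}\lambda^t\int u_Y\,d\nu_t$. $\delta_s$ denotes the Dirac measure at $s$. *)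

From HB Require Import structures.
From mathcomp Require Import all_boot all_order all_algebra.
From mathcomp Require Import all_classical all_reals all_analysis.
Set Implicit Arguments.
Unset Strict Implicit.
Unset Printing Implicit Defensive.
Import Order.TTheory GRing.Theory Num.Theory.
Import numFieldNormedType.Exports.

Local Open Scope classical_set_scope.
Local Open Scope ring_scope.

(* Histories of positive length: [hist SX SY t] is H^{t+1} = (S_X x S_Y)^{t+1},
   encoded as left-nested pairs ((..(z_0, z_1), ..), z_t) with the product
   sigma-algebra. H^0 = {empty} is handled separately (initial measures). *)
Fixpoint hist_disp (d1 d2 : measure_display) (t : nat) : measure_display :=
  match t with
  | 0 => measure_prod_display (d1, d2)
  | n.+1 => measure_prod_display (hist_disp d1 d2 n, measure_prod_display (d1, d2))
  end.

Fixpoint hist d1 d2 (SX : measurableType d1) (SY : measurableType d2) (t : nat)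
  : measurableType (hist_disp d1 d2 t) :=
  match t return measurableType (hist_disp d1 d2 t) with
  | 0 => (SX * SY)%type
  | n.+1 => (hist SX SY n * (SX * SY))%type
  end.

Definition hlast d1 d2 (SX : measurableType d1) (SY : measurableType d2) (t : nat)
  : hist SX SY t -> (SX * SY)%type :=
  match t return hist SX SY t -> (SX * SY)%type with
  | 0 => fun h => h
  | n.+1 => fun h => h.2
  end.

(* nu_t(E) = mu_t(H^t x E) *)
Definition nu_of d1 d2 (SX : measurableType d1) (SY : measurableType d2)
  (R : realType) (t : nat) (mu_t : set (hist SX SY t) -> \bar R)
  : set (SX * SY)%type -> \bar R :=
  pushforward mu_t (@hlast d1 d2 SX SY t).

Definition payoff d1 d2 (SX : measurableType d1) (SY : measurableType d2)
  (R : realType) (lambda : R)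
  (mu : forall t : nat, set (hist SX SY t) -> \bar R)
  (u : (SX * SY)%type -> R) : R :=
  (1 - lambda) *
  limn (series ((fun t : nat =>
     lambda ^+ t * fine (\int[nu_of (mu t)]_z (u z)%:E)%E) : R^nat)).

From HB Require Import structures.
From mathcomp Require Import all_boot all_order all_algebra.
From mathcomp Require Import all_classical all_reals all_analysis.
From mathcomp Require Import measurable_realfun ring lra.
Import Order.TTheory GRing.Theory Num.Theory.
Import numFieldNormedType.Exports.
Local Open Scope classical_set_scope.
Local Open Scope ring_scope.

(* Since X only ever plays s1 or s2, whatever Y does, the probability q_t
   that X plays s1 at round t satisfies q_(t+1) = E_(nu_t)[p], where nu_t is
   the law of the action pair at round t.  The choice of p makes
   g := phi (alpha u_X + beta u_Y + gamma) agree with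
   lambda p - [x = s1] + (1 - lambda) p0 on {s1, s2} x S_Y, so
   E_(nu_t)[g] = lambda q_(t+1) - q_t + (1 - lambda) q_0 and the discounted
   sum of these expectations telescopes to 0.  Singletons of S_X need not be
   measurable: "X plays s1" is read as "X plays in A" for a measurable
   sublevel set A of g(., y) separating s1 from s2. *)

Lemma product_measure1_setX {d1 d2} {T1 : measurableType d1}
    {T2 : measurableType d2} {R : realType} (m1 : {measure set T1 -> \bar R})
    (m2 : {measure set T2 -> \bar R}) (A1 : set T1) (A2 : set T2) :
  measurable A1 -> measurable A2 -> ((m1 \x m2) (A1 `*` A2) = m1 A1 * m2 A2)%E.
Proof.
move=> mA1 mA2; rewrite /product_measure1 /=.
rewrite (eq_integral (fun x => (\1_A1 x)%:E * m2 A2)%E); last first.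
  move=> x _; rewrite indicE; have [xA1|xA1] := boolP (x \in A1).
    by rewrite in_xsectionX // mul1e.
  by rewrite notin_xsectionX // mul0e.
by rewrite ge0_integralZr ?integral_indic ?setIT //; exact: measurableT_comp.
Qed.

Lemma exists_measurable_separating {d} {T : measurableType d} {R : realType}
    {f : T -> R} {s1 s2 : T} :
  measurable_fun setT f -> f s1 < f s2 ->
  exists A, [/\ measurable A, A s1 & ~ A s2].
Proof.
move=> mf f12; exists (f @^-1` `]-oo, f s2[); split.
- by rewrite -[_ @^-1` _]setTI; apply: mf => //; exact: measurable_itv.
- by rewrite /= in_itv.
- by rewrite /= in_itv /= ltxx.
Qed.

Section dirac_mixture.
Local Open Scope ereal_scope.
Context {d : measure_display} {T : measurableType d} {R : realType}.
Variables (s1 s2 : T) (p : R) (B : set T).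

Lemma dirac_mixture_null : ~ B s1 -> ~ B s2 ->
  p%:E * \d_s1 B + (1 - p)%:E * \d_s2 B = 0 :> \bar R.
Proof. by move=> nB1 nB2; rewrite !diracE !memNset //= !mule0 adde0. Qed.

Lemma dirac_mixture_sep : B s1 -> ~ B s2 ->
  fine (p%:E * \d_s1 B + (1 - p)%:E * \d_s2 B) = p :> R.
Proof.
by move=> B1 nB2; rewrite !diracE mem_set // memNset //= mulr1 mulr0 addr0.
Qed.

End dirac_mixture.

Section measure_unique_rectangles.
Local Open Scope ereal_scope.
Context {d1 d2 : measure_display} {T1 : measurableType d1}
  {T2 : measurableType d2} {R : realType}.
Context {m1 m2 : {measure set (T1 * T2) -> \bar R}}.
Hypothesis m1_fin : m1 setT < +oo.
Hypothesis m1m2 : forall A B, measurable A -> measurable B ->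
  m1 (A `*` B) = m2 (A `*` B).

Lemma measure_unique_rectangles X : measurable X -> m1 X = m2 X.
Proof.
pose G := [set A `*` B | A in @measurable _ T1 & B in @measurable _ T2].
apply: (measure_unique G (fun=> setT)) => //.
- exact: measurable_prod_measurableType.
- move=> _ _ [A1 mA1 [B1 mB1 <-]] [A2 mA2 [B2 mB2 <-]]; rewrite -setXI.
  exists (A1 `&` A2); first exact: measurableI.
  by exists (B1 `&` B2) => //; exact: measurableI.
- by move=> _; exists setT => //; exists setT => //; rewrite setXTT.
- by rewrite bigcup_const.
- by move=> _ [A mA [B mB <-]]; exact: m1m2.
Qed.

End measure_unique_rectangles.

Section concentration.
Local Open Scope ereal_scope.
Context {d1 d2 : measure_display} {SX : measurableType d1}
  {SY : measurableType d2} {R : realType}.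
Context {nu : {measure set (SX * SY) -> \bar R}} {s1 s2 : SX} {A : set SX}.
Hypotheses (nu_fin : nu setT < +oo) (mA : measurable A).
Hypotheses (As1 : A s1) (As2 : ~ A s2).
Hypothesis null_marginal :
  forall B, measurable B -> ~ B s1 -> ~ B s2 -> nu (B `*` setT) = 0.

Let rho (x : SX) : SX := if x \in A then s1 else s2.

Let measurable_rho : measurable_fun setT rho.
Proof.
apply: measurable_fun_ifT => //.
by apply: (measurable_fun_bool true); rewrite setTI preimage_mem_true.
Qed.

Let rho_s1 : rho s1 = s1. Proof. by rewrite /rho mem_set. Qed.
Let rho_s2 : rho s2 = s2. Proof. by rewrite /rho memNset. Qed.

(* [retract] moves only points whose first coordinate is neither s1 nor s2,
   so pushing [nu] along it changes nothing on rectangles, hence nothing. *)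
Let retract (z : SX * SY) : SX * SY := (rho z.1, z.2).

Let measurable_retract : measurable_fun setT retract.
Proof.
exact: measurable_fun_pair (measurableT_comp measurable_rho measurable_fst)
  measurable_snd.
Qed.

Let retract_rect B C : measurable B -> measurable C ->
  pushforward nu retract (B `*` C) = nu (B `*` C).
Proof.
move=> mB mC.
have mrhoB : measurable (rho @^-1` B).
  by rewrite -[_ @^-1` _]setTI; exact: measurable_rho.
pose D := (B `\` rho @^-1` B) `|` (rho @^-1` B `\` B).
have mD : measurable D by apply: measurableU; exact: measurableD.
have D0 : nu (D `*` [set: SY]) = 0.
  apply: null_marginal => //;
  by rewrite /D /preimage /= ?rho_s1 ?rho_s2; case=> -[].
have mDT : measurable (D `*` [set: SY]) by exact: measurableX.
rewrite /pushforward (_ : retract @^-1` _ = rho @^-1` B `*` C) //.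
rewrite -(measureU0 (mu := nu) _ mDT D0); last exact: measurableX.
rewrite -[RHS](measureU0 (mu := nu) _ mDT D0); last exact: measurableX.
congr (nu _); apply/seteqP; split=> -[x y] /=; rewrite /D /preimage /=;
  have := pselect (B x); have := pselect (B (rho x)); tauto.
Qed.

Lemma measure_concentrated N : measurable N ->
  (forall y, ~ N (s1, y) /\ ~ N (s2, y)) -> nu N = 0.
Proof.
move=> mN Nnull.
have fin : pushforward nu retract setT < +oo.
  by rewrite /pushforward preimage_setT.
rewrite -(measure_unique_rectangles fin retract_rect N mN).
rewrite /= /pushforward (_ : retract @^-1` N = set0) ?measure0 //.
apply/seteqP; split=> // -[x y]; rewrite /retract /rho /preimage /=.
by case: ifP => _; apply (Nnull y).
Qed.

Lemma integral_concentrated_eq (f g : (SX * SY)%type -> \bar R) :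
  measurable_fun setT f -> measurable_fun setT g ->
  (forall y, f (s1, y) = g (s1, y) /\ f (s2, y) = g (s2, y)) ->
  \int[nu]_z f z = \int[nu]_z g z.
Proof.
move=> mf mg fg; apply: ae_eq_integral => //.
exists (setT `&` [set z | f z != g z]); split.
- exact: measurable_neqe.
- apply: measure_concentrated; first exact: measurable_neqe.
  by move=> y; have [e1 e2] := fg y; rewrite /= e1 e2 !eqxx; split => -[].
- by move=> z /= fgz; split => //; apply/negP => /eqP e; apply: fgz.
Qed.

End concentration.

Section probability_Rintegral.
Context {d : measure_display} {T : measurableType d} {R : realType}.
Context {P : probability T R}.

Lemma integrable_bounded (f : T -> R) : measurable_fun setT f ->
  (exists M, forall x, `|f x| <= M) -> P.-integrable setT (EFin \o f).
Proof.
move=> mf [M fM]; apply: measurable_bounded_integrable => //.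
  exact: le_lt_trans (probability_le1 P measurableT) (ltry 1).
exists M; split; first by rewrite num_real.
by move=> K MK x _; exact: le_trans (fM x) (ltW MK).
Qed.

Lemma Rintegral_prob_cst (c : R) : Rintegral P setT (fun=> c) = c.
Proof.
have P1 : fine (P setT) = 1 by rewrite probability_setT.
by rewrite Rintegral_cst // P1 mulr1.
Qed.

Lemma Rintegral_lincomb (a b c : R) (f g : T -> R) :
  P.-integrable setT (EFin \o f) -> P.-integrable setT (EFin \o g) ->
  Rintegral P setT (fun x => a * f x + b * g x + c) =
  a * Rintegral P setT f + b * Rintegral P setT g + c.
Proof.
move=> intf intg.
have intZ (k : R) h : P.-integrable setT (EFin \o h) ->
    P.-integrable setT (EFin \o (fun x => k * h x)) by exact: integrableZl.
have intfg : P.-integrable setT (EFin \o (fun x => a * f x + b * g x)).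
  have -> : EFin \o (fun x => a * f x + b * g x) =
    ((EFin \o (fun x => a * f x)%R) \+ (EFin \o (fun x => b * g x)%R))%E by [].
  by apply: integrableD => //; exact: intZ.
rewrite RintegralD //; last exact: finite_measure_integrable_cst.
by rewrite Rintegral_prob_cst RintegralD ?intZ // !RintegralZl.
Qed.

Lemma Rintegral_norm_le (f : T -> R) (M : R) : measurable_fun setT f ->
  (forall x, `|f x| <= M) -> `|Rintegral P setT f| <= M.
Proof.
move=> mf fM; have intf : P.-integrable setT (EFin \o f).
  by apply: integrable_bounded => //; exists M.
apply: le_trans (le_normr_Rintegral _ intf) _ => //.
rewrite -[leRHS](Rintegral_prob_cst M); apply: le_Rintegral => //.
- exact: integrable_norm.
- exact: finite_measure_integrable_cst.
Qed.

End probability_Rintegral.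

Section discounted_mean.
Context {R : realType} (lambda : R).
Hypotheses (lambda_gt0 : 0 < lambda) (lambda_lt1 : lambda < 1).

Definition discounted_mean (x : R^nat) : R :=
  (1 - lambda) * limn (series (fun t => lambda ^+ t * x t)).

Let lambda_norm_lt1 : `|lambda| < 1.
Proof. by rewrite ger0_norm // ltW. Qed.

Lemma is_cvg_discounted_series (x : R^nat) :
  (exists M, forall t, `|x t| <= M) ->
  cvgn (series (fun t => lambda ^+ t * x t)).
Proof.
move=> [M xM]; have lambdaX_ge0 t : 0 <= lambda ^+ t by exact/exprn_ge0/ltW.
apply: normed_cvg; apply: (@series_le_cvg _ _ (geometric M lambda)).
- by move=> t; exact: normr_ge0.
- by move=> t; rewrite /geometric /= mulr_ge0 // (le_trans _ (xM 0%N)).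
- by move=> t; rewrite /geometric /= normrM ger0_norm // mulrC ler_wpM2r.
- exact: is_cvg_geometric_series.
Qed.

Lemma discounted_mean_lincomb (a b c : R) (x y : R^nat) :
  (exists M, forall t, `|x t| <= M) -> (exists M, forall t, `|y t| <= M) ->
  discounted_mean (fun t => a * x t + b * y t + c) =
  a * discounted_mean x + b * discounted_mean y + c.
Proof.
move=> /is_cvg_discounted_series cx /is_cvg_discounted_series cy.
have lambda1 : 1 - lambda != 0 by rewrite subr_eq0 gt_eqF.
rewrite /discounted_mean.
have -> : series (fun t => lambda ^+ t * (a * x t + b * y t + c)) =
    (fun n => a * series (fun t => lambda ^+ t * x t) n +
              b * series (fun t => lambda ^+ t * y t) n +
              series (geometric c lambda) n).
  apply/funext => n; rewrite /series /= !mulr_sumr -!big_split /=.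
  by apply: eq_bigr => t _; rewrite /geometric; ring.
rewrite (cvg_lim _ (cvgD (cvgD (cvgM (cvg_cst a) cx) (cvgM (cvg_cst b) cy))
  (@cvg_geometric_series _ c lambda lambda_norm_lt1))) //.
by field.
Qed.

Lemma discounted_mean_telescope (q : R^nat) :
  (exists M, forall t, `|q t| <= M) ->
  discounted_mean (fun t => lambda * q t.+1 - q t + (1 - lambda) * q 0%N) = 0.
Proof.
move=> [M qM]; rewrite /discounted_mean.
have -> : series (fun t => lambda ^+ t *
    (lambda * q t.+1 - q t + (1 - lambda) * q 0%N)) =
    (fun n => lambda ^+ n * (q n - q 0%N)).
  apply/funext; elim=> [|n IH].
    by rewrite /series /= big_geq // subrr mulr0.
  by rewrite seriesSr IH exprS; ring.
suff -> : limn (fun n => lambda ^+ n * (q n - q 0%N)) = 0 by rewrite mulr0.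
apply: cvg_lim => //.
apply: (@squeeze_cvgr _ _ _ _ (geometric (- (2 * M)) lambda)
  (geometric (2 * M) lambda)).
- apply: nearW => n; rewrite /geometric /=.
  have lambdaX_ge0 : 0 <= lambda ^+ n by exact/exprn_ge0/ltW.
  have := qM n; have := qM 0%N; rewrite !ler_norml => /andP[? ?] /andP[? ?].
  by apply/andP; split; nra.
- exact: cvg_geometric.
- exact: cvg_geometric.
Qed.

End discounted_mean.

Lemma discounted_mean_Rintegral_lincomb {d} {T : measurableType d}
    {R : realType} (nu : nat -> probability T R) (lambda a b c : R)
    (f g : T -> R) :
  0 < lambda -> lambda < 1 -> measurable_fun setT f -> measurable_fun setT g ->
  (exists M, forall x, `|f x| <= M) -> (exists M, forall x, `|g x| <= M) ->
  discounted_mean lambda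
    (fun t => Rintegral (nu t) setT (fun x => a * f x + b * g x + c)) =
  a * discounted_mean lambda (fun t => Rintegral (nu t) setT f) +
  b * discounted_mean lambda (fun t => Rintegral (nu t) setT g) + c.
Proof.
move=> lambda_gt0 lambda_lt1 mf mg [Mf fM] [Mg gM].
rewrite -discounted_mean_lincomb //; last 2 first.
- by exists Mf => t; exact: Rintegral_norm_le.
- by exists Mg => t; exact: Rintegral_norm_le.
congr discounted_mean; apply/funext => t.
rewrite Rintegral_lincomb //.
  by apply: integrable_bounded => //; exists Mf.
by apply: integrable_bounded => //; exists Mg.
Qed.

Section last_play_law.
Local Open Scope ereal_scope.
Context {d1 d2 : measure_display} {SX : measurableType d1}
  {SY : measurableType d2} {R : realType}.

Lemma measurable_hlast t : measurable_fun setT (@hlast _ _ SX SY t).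
Proof. by case: t => [|t]; [exact: measurable_id|exact: measurable_snd]. Qed.

Definition hlast_mfun t : {mfun hist SX SY t >-> (SX * SY)%type} :=
  HB.pack (@hlast _ _ SX SY t)
    (isMeasurableFun.Build _ _ _ _ _ (measurable_hlast t)).

Definition last_play_law {t} (P : probability (hist SX SY t) R) :
  probability (SX * SY)%type R := distribution P (hlast_mfun t).

Lemma payoffE (lambda : R) (mu : forall t, probability (hist SX SY t) R)
    (u : (SX * SY)%type -> R) :
  payoff lambda (fun t => mu t) u =
  discounted_mean lambda (fun t => Rintegral (last_play_law (mu t)) setT u).
Proof. by []. Qed.

Context {sigX0 : probability SX R} {sigX : R.-pker (SX * SY)%type ~> SX}.
Context {sigY0 : probability SY R}.
Context {sigY : forall t, R.-pker (hist SX SY t) ~> SY}.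
Context {mu : forall t, probability (hist SX SY t) R}.
Hypothesis mu0 : forall E, measurable E -> mu 0%N E = (sigX0 \x sigY0) E.
Hypothesis muS : forall t (E' : set (hist SX SY t)) (E : set (SX * SY)),
  measurable E' -> measurable E ->
  mu t.+1 (E' `*` E) = \int[mu t]_(h in E') (sigX (hlast h) \x sigY t h) E.

Lemma last_play_law0_marginal B : measurable B ->
  last_play_law (mu 0%N) (B `*` setT) = sigX0 B.
Proof.
move=> mB; rewrite /= /distribution /pushforward /= mu0; last first.
  exact: measurableX.
rewrite product_measure1_setX // -[RHS]mule1; congr (_ * _).
exact: probability_setT.
Qed.

Lemma last_play_lawS_marginal t B : measurable B ->
  last_play_law (mu t.+1) (B `*` setT) =
  \int[last_play_law (mu t)]_z sigX z B.
Proof.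
move=> mB; rewrite ge0_integral_distribution //; last exact: measurable_kernel.
rewrite /= /distribution /pushforward /=.
rewrite (_ : _ @^-1` _ = setT `*` (B `*` setT)); last first.
  by apply/seteqP; split=> -[h z] /=; [move=> ?; split|case].
rewrite muS //; last exact: measurableX.
apply: eq_integral => h _.
rewrite product_measure1_setX // -[RHS]mule1; congr (_ * _).
exact: prob_kernel.
Qed.

End last_play_law.

Section marginal_dynamics.
Context {d1 d2 : measure_display} {SX : measurableType d1}
  {SY : measurableType d2} {R : realType}.
Context {nu : nat -> probability (SX * SY)%type R}.
Context {sigX0 : probability SX R} {sigX : R.-pker (SX * SY)%type ~> SX}.
Hypothesis nu_marginal0 : forall B, measurable B ->
  nu 0%N (B `*` setT) = sigX0 B.
Hypothesis nu_marginalS : forall t B, measurable B ->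
  nu t.+1 (B `*` setT) = (\int[nu t]_z sigX z B)%E.
Context {A : set SX}.
Hypothesis mA : measurable A.

Let mAT : measurable (A `*` [set: SY]). Proof. exact: measurableX. Qed.

Let sigX_le1 z : (sigX z A <= 1)%E.
Proof.
by rewrite -(prob_kernel (s := sigX) z); apply: le_measure; rewrite ?inE.
Qed.

Let sigX_fin_num z : sigX z A \is a fin_num.
Proof. by rewrite ge0_fin_numE // (le_lt_trans (sigX_le1 z) (ltry 1)). Qed.

Lemma Rintegral_indic_fst t :
  Rintegral (nu t) setT (fun z => \1_A z.1) = fine (nu t (A `*` setT)).
Proof.
rewrite /Rintegral; congr fine.
transitivity (\int[nu t]_z (\1_(A `*` [set: SY]) z)%:E)%E.
  by apply: eq_integral => -[x y] _; rewrite !indicE in_setX in_setT andbT.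
by rewrite integral_indic // setIT.
Qed.

Lemma Rintegral_indic_fst0 :
  Rintegral (nu 0%N) setT (fun z => \1_A z.1) = fine (sigX0 A).
Proof. by rewrite Rintegral_indic_fst nu_marginal0. Qed.

Lemma Rintegral_indic_fstS t :
  Rintegral (nu t.+1) setT (fun z => \1_A z.1) =
  Rintegral (nu t) setT (fun z => fine (sigX z A)).
Proof.
rewrite Rintegral_indic_fst nu_marginalS //; congr fine.
by apply: eq_integral => z _; rewrite fineK.
Qed.

Context {s1 s2 : SX}.
Hypotheses (As1 : A s1) (As2 : ~ A s2).
Hypothesis sigX0_null : forall B, measurable B -> ~ B s1 -> ~ B s2 ->
  sigX0 B = 0%E.
Hypothesis sigX_null : forall y B, measurable B -> ~ B s1 -> ~ B s2 ->
  sigX (s1, y) B = 0%E /\ sigX (s2, y) B = 0%E.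

Let nu_fin t : (nu t setT < +oo)%E.
Proof. exact: le_lt_trans (probability_le1 (nu t) measurableT) (ltry 1). Qed.

Lemma marginal_null t B : measurable B -> ~ B s1 -> ~ B s2 ->
  nu t (B `*` setT) = 0%E.
Proof.
elim: t B => [|t IH] B mB nB1 nB2; first by rewrite nu_marginal0 // sigX0_null.
rewrite nu_marginalS // -(integral0 (nu t) setT).
apply: (integral_concentrated_eq (nu_fin t) mA As1 As2 IH).
- exact: measurable_kernel.
- exact: measurable_cst.
- by move=> y; have [-> ->] := sigX_null y B mB nB1 nB2.
Qed.

Lemma Rintegral_concentrated_eq t (f g : (SX * SY)%type -> R) :
  measurable_fun setT f -> measurable_fun setT g ->
  (forall y, f (s1, y) = g (s1, y) /\ f (s2, y) = g (s2, y)) ->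
  Rintegral (nu t) setT f = Rintegral (nu t) setT g.
Proof.
move=> mf mg fg; rewrite /Rintegral; congr fine.
apply: (integral_concentrated_eq (nu_fin t) mA As1 As2 (@marginal_null t)).
- exact/measurable_EFinP.
- exact/measurable_EFinP.
- by move=> y /=; have [-> ->] := fg y.
Qed.

Lemma discounted_mean_equalizer (lambda p0 : R) (g : (SX * SY)%type -> R) :
  0 < lambda -> lambda < 1 -> measurable_fun setT g -> fine (sigX0 A) = p0 ->
  (forall y,
    lambda * fine (sigX (s1, y) A) = g (s1, y) - (1 - lambda) * p0 + 1 /\
    lambda * fine (sigX (s2, y) A) = g (s2, y) - (1 - lambda) * p0) ->
  discounted_mean lambda (fun t => Rintegral (nu t) setT g) = 0.
Proof.
move=> lambda_gt0 lambda_lt1 mg sigX0A sigXA.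
pose P z := fine (sigX z A).
pose q t := Rintegral (nu t) setT (fun z => \1_A z.1).
have mP : measurable_fun setT P.
  by apply: measurableT_comp => //; exact: measurable_kernel.
have mI : measurable_fun setT (fun z : SX * SY => \1_A z.1 : R).
  exact: measurableT_comp (measurable_indic mA) measurable_fst.
have I1 (z : SX * SY) : `|\1_A z.1 : R| <= 1.
  by rewrite indicE; case: (_ \in _); rewrite ?normr1 ?normr0.
have P1 z : `|P z| <= 1.
  by rewrite ger0_norm ?fine_ge0 // -lee_fin fineK.
have qS t : Rintegral (nu t) setT g = lambda * q t.+1 - q t + (1 - lambda) * p0.
  rewrite /q Rintegral_indic_fstS.
  rewrite (Rintegral_concentrated_eq t g
    (fun z => lambda * P z + (-1) * \1_A z.1 + (1 - lambda) * p0)) //.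
  - rewrite Rintegral_lincomb //; first by ring.
      by apply: integrable_bounded => //; exists 1.
    by apply: integrable_bounded => //; exists 1.
  - apply: measurable_funD => //.
    by apply: measurable_funD => //; exact: measurable_funM.
  - move=> y; have [e1 e2] := sigXA y.
    by rewrite /P !indicE /= mem_set // memNset // /= mulr1n mulr0n; split; lra.
have q0 : q 0%N = p0 by rewrite /q Rintegral_indic_fst0.
rewrite (_ : (fun t => _) =
    fun t => lambda * q t.+1 - q t + (1 - lambda) * q 0%N).
  apply: discounted_mean_telescope => //.
  by exists 1 => t; exact: Rintegral_norm_le.
by apply/funext => t; rewrite qS q0.
Qed.

End marginal_dynamics.

Lemma equalizer_bounds_lt {R : realFieldType} (lambda p0 phi a b : R) :
  lambda < 1 -> 0 < phi ->
  a <= - ((1 - lambda) * (1 - p0) / phi) -> (1 - lambda) * p0 / phi <= b ->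
  phi * a < phi * b.
Proof.
move=> lambda_lt1 phi_gt0 ha hb.
have phi0 : phi != 0 by rewrite gt_eqF.
have e1 : phi * ((1 - lambda) * p0 / phi) = (1 - lambda) * p0 by field.
have e2 : phi * - ((1 - lambda) * (1 - p0) / phi) = - ((1 - lambda) * (1 - p0))
  by field.
have := ler_wpM2l (ltW phi_gt0) ha; have := ler_wpM2l (ltW phi_gt0) hb.
rewrite e1 e2; lra.
Qed.

Theorem corollary1
  (d1 d2 : measure_display) (SX : measurableType d1) (SY : measurableType d2)
  (R : realType)
  (uX uY : (SX * SY)%type -> R)
  (muX : measurable_fun [set: (SX * SY)%type] uX)
  (muY : measurable_fun [set: (SX * SY)%type] uY)
  (buX : exists M : R, forall z, `|uX z| <= M)
  (buY : exists M : R, forall z, `|uY z| <= M)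
  (lambda : R) (hl0 : 0 < lambda) (hl1 : lambda < 1)
  (alpha beta gamma : R) (s1 s2 : SX) (p0 phi : R)
  (hp00 : 0 <= p0) (hp01 : p0 <= 1) (hphi : 0 < phi)
  (f1 := fun y : SY => alpha * uX (s1, y) + beta * uY (s1, y) + gamma)
  (f2 := fun y : SY => alpha * uX (s2, y) + beta * uY (s2, y) + gamma)
  (hf1 : forall y : SY,
      - ((1 - (1 - lambda) * p0) / phi) <= f1 y /\
      f1 y <= - ((1 - lambda) * (1 - p0) / phi))
  (hf2 : forall y : SY,
      (1 - lambda) * p0 / phi <= f2 y /\
      f2 y <= (lambda + (1 - lambda) * p0) / phi)
  (p1 := fun y : SY => lambda^-1 * (phi * f1 y - (1 - lambda) * p0 + 1))
  (p2 := fun y : SY => lambda^-1 * (phi * f2 y - (1 - lambda) * p0))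
  (* player X: memory-one strategy *)
  (sigX0 : probability SX R)
  (hsigX0 : forall A, measurable A ->
      sigX0 A = (p0%:E * \d_s1 A + (1 - p0)%:E * \d_s2 A)%E)
  (sigX : R.-pker (SX * SY)%type ~> SX)
  (hsigX1 : forall (y : SY) A, measurable A ->
      sigX (s1, y) A = ((p1 y)%:E * \d_s1 A + (1 - p1 y)%:E * \d_s2 A)%E)
  (hsigX2 : forall (y : SY) A, measurable A ->
      sigX (s2, y) A = ((p2 y)%:E * \d_s1 A + (1 - p2 y)%:E * \d_s2 A)%E)
  (* player Y: arbitrary behavioral strategy (kernel on H^0 and on each H^{t+1}) *)
  (sigY0 : probability SY R)
  (sigY : forall t : nat, R.-pker (hist SX SY t) ~> SY)
  (* the induced measures mu_t on H^{t+1} *)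
  (mu : forall t : nat, probability (hist SX SY t) R)
  (hmu0 : forall E : set (SX * SY)%type, measurable E ->
      mu 0%N E = (sigX0 \x sigY0)%E E)
  (hmuS : forall (t : nat) (E' : set (hist SX SY t)) (E : set (SX * SY)%type),
      measurable E' -> measurable E ->
      mu t.+1 (E' `*` E) =
      (\int[mu t]_(h in E') (sigX (hlast h) \x sigY t h) E)%E) :
  alpha * payoff lambda (fun t => mu t) uX
  + beta * payoff lambda (fun t => mu t) uY + gamma = 0.
Proof.
pose G z := phi * alpha * uX z + phi * beta * uY z + phi * gamma.
have mG : measurable_fun setT G.
  apply: measurable_funD => //.
  by apply: measurable_funD => //; exact: measurable_funM.
have Gf y : G (s1, y) = phi * f1 y /\ G (s2, y) = phi * f2 y.
  by rewrite /G /f1 /f2; split; ring.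
(* hf1 and hf2 serve only to separate s1 from s2: that p1 and p2 lie in
   [0, 1] already follows from sigX being a probability kernel. *)
have [A [mA As1 As2]] : exists A, [/\ measurable A, A s1 & ~ A s2].
  apply: (exists_measurable_separating (measurable_fun_pair1 point mG)).
  have [-> ->] := Gf point.
  exact: equalizer_bounds_lt hl1 hphi (hf1 point).2 (hf2 point).1.
have : discounted_mean lambda
    (fun t => Rintegral (last_play_law (mu t)) setT G) = 0.
  apply: (discounted_mean_equalizer (last_play_law0_marginal hmu0)
    (last_play_lawS_marginal hmuS) mA As1 As2 _ _ lambda p0) => //.
  - by move=> B mB nB1 nB2; rewrite hsigX0 // dirac_mixture_null.
  - by move=> y B mB nB1 nB2; rewrite hsigX1 // hsigX2 // !dirac_mixture_null.
  - by rewrite hsigX0 // dirac_mixture_sep.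
  - move=> y; rewrite hsigX1 // hsigX2 // !dirac_mixture_sep // /p1 /p2.
    by have [-> ->] := Gf y; rewrite !mulVKf ?gt_eqF.
rewrite /G discounted_mean_Rintegral_lincomb // !payoffE => G0.
apply: (@mulfI _ phi); first by rewrite gt_eqF.
by rewrite mulr0 -G0; ring.
Qed.
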